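(* Let $\lambda>0$ and let $A\in\mathbb{R}^{3\times3}$ with $\det A>0$, whose singular values satisfy $\lambda_1\le\lambda_2\le\lambda_3$. Let $\alpha=\lambda_2\lambda_3-\lambda\lambda_1$, $\beta=\lambda_1\lambda_3-\lambda\lambda_2$, $\gamma=\lambda_1\lambda_2-\lambda\lambda_3$. Then there is $R\in SO(3)$ such that $$G(A)=(1-R_{11})\alpha+(1-R_{22})\beta+(1-R_{33})\gamma.$$
   Context: Singular values of $A$ are the square roots of the eigenvalues of $A^TA$. $P(A)=\sum_{1\le i<j\le3}\lambda_i(A)\lambda_j(A)-\lambda\sum_i\lambda_i(A)$, $N(A)=\operatorname{tr}\operatorname{cof}A-\lambda\operatorname{tr}A$ (cof the cofactor matrix), and $G(A)=P(A)-N(A)$. *)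

From HB Require Import structures.
From mathcomp Require Import all_boot all_order all_algebra.
From mathcomp Require Import reals.
Set Implicit Arguments. Unset Strict Implicit. Unset Printing Implicit Defensive.
Import Order.TTheory GRing.Theory Num.Theory.
Local Open Scope ring_scope.

Definition i0 : 'I_3 := @Ordinal 3 0 isT.
Definition i1 : 'I_3 := @Ordinal 3 1 isT.
Definition i2 : 'I_3 := @Ordinal 3 2 isT.

(* l1 <= l2 <= l3 are the singular values of A (with multiplicity):
   they are nonnegative and their squares are the eigenvalues of A^T A,
   counted with multiplicity, i.e. the roots of its characteristic polynomial. *)
Definition sorted_singular_values (R : realType) (A : 'M[R]_3) (l1 l2 l3 : R) : Prop :=
  [/\ 0 <= l1, l1 <= l2, l2 <= l3 &
      char_poly (A^T *m A) = ('X - (l1 ^+ 2)%:P) * ('X - (l2 ^+ 2)%:P) * ('X - (l3 ^+ 2)%:P)].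

Definition cofmx (R : realType) (A : 'M[R]_3) : 'M[R]_3 :=
  \matrix_(i, j) cofactor A i j.

(* P(A), expressed through the singular values l1 l2 l3 of A *)
Definition Pfun (R : realType) (lam l1 l2 l3 : R) : R :=
  l1 * l2 + l1 * l3 + l2 * l3 - lam * (l1 + l2 + l3).

Definition Nfun (R : realType) (lam : R) (A : 'M[R]_3) : R :=
  \tr (cofmx A) - lam * \tr A.

Definition SO3 (R : realType) (Q : 'M[R]_3) : Prop :=
  Q^T *m Q = 1%:M /\ \det Q = 1.

(* A has a signed singular value decomposition A = U diag(l1, l2, l3) V with U and V
   rotations: a rotation V diagonalises A^T A into diag(l1^2, l2^2, l3^2), and since
   det A = l1 l2 l3 > 0 the orthogonal matrix U = A V^T diag(l)^-1 has determinant 1.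
   With Q = V U, cyclicity of the trace gives tr A = sum_i Q_ii l_i, while
   adj A = det A A^-1 = l1 l2 l3 V^T diag(l)^-1 U^T gives
   tr cof A = tr adj A = Q_11 l2 l3 + Q_22 l1 l3 + Q_33 l1 l2.
   Subtracting both from P gives the formula. *)

From HB Require Import structures.
From mathcomp Require Import all_boot all_order all_algebra.
From mathcomp Require Import reals ring lra.
Import Order.TTheory GRing.Theory Num.Theory.
Set Implicit Arguments. Unset Strict Implicit. Unset Printing Implicit Defensive.
Local Open Scope ring_scope.

Section CharPoly.
Variables (R : comNzRingType) (n : nat) (S : 'M[R]_n) (rs : seq R).
Hypothesis cpS : char_poly S = \prod_(r <- rs) ('X - r%:P).

Lemma size_char_poly_roots : size rs = n.
Proof. by apply: succn_inj; rewrite -(size_prod_XsubC _ id) -cpS size_char_poly. Qed.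

Lemma mxtrace_char_poly_roots : \tr S = \sum_(r <- rs) r.
Proof.
have szrs := size_char_poly_roots.
case: n S cpS szrs => [T|k T] cpT szrs.
  by rewrite /mxtrace big_ord0; case: rs szrs => // _; rewrite big_nil.
by apply: oppr_inj; rewrite -char_poly_trace // cpT -coefPn_prod_XsubC szrs.
Qed.

Lemma det_char_poly_roots : \det S = \prod_(r <- rs) r.
Proof.
apply: (can_inj (signrMK n)).
by rewrite -char_poly_det cpS coef0_prod_XsubC size_char_poly_roots.
Qed.

End CharPoly.

Lemma prod_XsubC3 (R : comNzRingType) (a b c : R) :
  ('X - a%:P) * ('X - b%:P) * ('X - c%:P) = \prod_(r <- [:: a; b; c]) ('X - r%:P).
Proof. by rewrite !big_cons big_nil mulr1 mulrA. Qed.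

Lemma mulmx_tr_self_diag (R : pzSemiRingType) m n (X : 'M[R]_(m, n)) i :
  (X *m X^T) i i = \sum_k X i k ^+ 2.
Proof. by rewrite mxE; apply: eq_bigr => k _; rewrite mxE. Qed.

Lemma mulmx_tr_self_eq0 (R : realDomainType) m n (X : 'M[R]_(m, n)) :
  (X *m X^T == 0) = (X == 0).
Proof.
apply/eqP/eqP => [XX0|->]; last by rewrite mul0mx.
apply/matrixP => i j; have /eqP := congr1 (fun M : 'M_m => M i i) XX0.
rewrite mulmx_tr_self_diag mxE psumr_eq0 => [|k _]; last exact: sqr_ge0.
by move=> /allP/(_ j (mem_index_enum j)); rewrite sqrf_eq0 mxE => /eqP.
Qed.

Lemma trmx_exp (R : comPzRingType) n (T : 'M[R]_n) k : (T ^+ k)^T = T^T ^+ k.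
Proof.
elim: k => [|k IH]; first by rewrite !expr0 trmx1.
by rewrite exprS -mulmxE trmx_mul IH mulmxE -exprSr.
Qed.

Lemma symmetric_nilpotent_eq0 (R : realDomainType) n (T : 'M[R]_n) k :
  T^T = T -> T ^+ k.+1 = 0 -> T = 0.
Proof.
move=> Tsym; elim: k => [|k IH Tk]; first by rewrite expr1.
apply: IH; apply/eqP; rewrite -mulmx_tr_self_eq0 trmx_exp Tsym mulmxE -exprD.
by rewrite addSnnS addnC exprD Tk mul0r.
Qed.

Lemma symmetric_char_poly_scalar (R : realFieldType) n (S : 'M[R]_n.+1) m :
  S^T = S -> char_poly S = ('X - m%:P) ^+ n.+1 -> S = m%:M.
Proof.
move=> Ssym cpS; apply/eqP; rewrite -subr_eq0; apply/eqP.
apply: (@symmetric_nilpotent_eq0 _ _ _ n).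
  by rewrite linearB /= Ssym tr_scalar_mx.
have := Cayley_Hamilton S.
by rewrite cpS rmorphXn rmorphB /= horner_mx_X horner_mx_C.
Qed.

Lemma symmetric_eigenvectors_orthogonal (R : fieldType) n (S : 'M[R]_n)
    (a c : 'rV_n) m1 m3 :
  S^T = S -> a *m S = m1 *: a -> c *m S = m3 *: c -> m1 != m3 -> a *m c^T = 0.
Proof.
move=> Ssym Ha Hc m13; apply/eqP.
have : (m1 - m3) *: (a *m c^T) == 0.
  rewrite scalerBl subr_eq0 scalemxAl -Ha -mulmxA -[S]Ssym -trmx_mul Hc.
  by rewrite linearZ /= scalemxAr.
by rewrite scaler_eq0 subr_eq0 (negbTE m13).
Qed.

Lemma unit_eigenvector (R : rcfType) n (S : 'M[R]_n) m (v : 'rV_n) :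
  v != 0 -> v *m S = m *: v ->
  exists u : 'rV_n, u *m S = m *: u /\ u *m u^T = 1%:M.
Proof.
move=> v0 Hv; set d := (v *m v^T) 0 0.
have d_gt0 : 0 < d.
  rewrite lt_def /d mulmx_tr_self_diag sumr_ge0 ?andbT => [|k _]; last exact: sqr_ge0.
  rewrite -mulmx_tr_self_diag; apply: contraNneq v0 => d0.
  by rewrite -mulmx_tr_self_eq0 [_ *m _]mx11_scalar d0 raddf0.
have s_gt0 : 0 < Num.sqrt d by rewrite sqrtr_gt0.
exists ((Num.sqrt d)^-1 *: v); split.
  by rewrite -scalemxAl Hv !scalerA mulrC.
rewrite linearZ /= -scalemxAl -scalemxAr scalerA [_ *m _]mx11_scalar -/d.
rewrite -invfM -expr2 sqr_sqrtr ?ltW // scale_scalar_mx mulVf ?gt_eqF //.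
Qed.

Lemma mxtrace_mul_diag (R : pzSemiRingType) n (M : 'M[R]_n) (d : 'rV_n) :
  \tr (M *m diag_mx d) = \sum_i M i i * d 0 i.
Proof. by apply: eq_bigr => i _; rewrite mul_mx_diag mxE. Qed.

Lemma mxtrace_conj_diag (R : comPzRingType) n (U V : 'M[R]_n) (d : 'rV_n) :
  \tr (U *m diag_mx d *m V) = \sum_i (V *m U) i i * d 0 i.
Proof. by rewrite mxtrace_mulC mulmxA mxtrace_mul_diag. Qed.

Lemma adj_mulmx1 (R : comPzRingType) n (A B : 'M[R]_n) :
  A *m B = 1%:M -> \adj A = \det A *: B.
Proof. by move=> AB; rewrite -[\adj A]mulmx1 -AB mulmxA mul_adj_mx mul_scalar_mx. Qed.

Lemma diag_mx_mulV (R : fieldType) n (d : 'rV[R]_n) : (forall i, d 0 i != 0) ->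
  diag_mx d *m diag_mx (map_mx GRing.inv d) = 1%:M.
Proof.
move=> d0; rewrite mulmx_diag -diag_const_mx; congr diag_mx.
by apply/rowP => i; rewrite !mxE mulfV.
Qed.

Lemma adj_orthogonal_conj_diag (R : fieldType) n (U V : 'M[R]_n) (d : 'rV_n) :
  U^T *m U = 1%:M -> V^T *m V = 1%:M -> (forall i, d 0 i != 0) ->
  \adj (U *m diag_mx d *m V) =
    \det (U *m diag_mx d *m V) *: (V^T *m diag_mx (map_mx GRing.inv d) *m U^T).
Proof.
move=> UtU VtV d0; apply: adj_mulmx1.
rewrite -!mulmxA (mulmxA V) (mulmx1C VtV) mul1mx (mulmxA (diag_mx d)).
by rewrite diag_mx_mulV // mul1mx (mulmx1C UtU).
Qed.

Lemma ord3P (i : 'I_3) : [\/ i = i0, i = i1 | i = i2].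
Proof.
case: i => [[|[|[|//]]] ?]; [constructor 1|constructor 2|constructor 3].
all: exact: val_inj.
Qed.

Lemma sum3 (R : nmodType) (F : 'I_3 -> R) : \sum_(i < 3) F i = F i0 + F i1 + F i2.
Proof.
rewrite !big_ord_recl big_ord0 addr0 addrA.
by congr (F _ + F _ + F _); apply: val_inj.
Qed.

Lemma prod3 (R : comPzSemiRingType) (F : 'I_3 -> R) :
  \prod_(i < 3) F i = F i0 * F i1 * F i2.
Proof.
rewrite !big_ord_recl big_ord0 mulr1 mulrA.
by congr (F _ * F _ * F _); apply: val_inj.
Qed.

Definition row3 (R : nmodType) (a b c : R) : 'rV[R]_3 := \row_j [:: a; b; c]`_j.

Definition rows3 (R : nmodType) (a b c : 'rV[R]_3) : 'M[R]_3 :=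
  \matrix_(i, j) [:: a; b; c]`_i 0 j.

Lemma row3_neq0 (R : numDomainType) (a b c : R) :
  0 < a -> 0 < b -> 0 < c -> forall i, row3 a b c 0 i != 0.
Proof.
by move=> a_gt0 b_gt0 c_gt0 i; rewrite mxE; case: (ord3P i) => -> /=; rewrite gt_eqF.
Qed.

Definition crossmul (R : pzRingType) (u v : 'rV[R]_3) : 'rV[R]_3 :=
  row3 (u 0 i1 * v 0 i2 - u 0 i2 * v 0 i1)
       (u 0 i2 * v 0 i0 - u 0 i0 * v 0 i2)
       (u 0 i0 * v 0 i1 - u 0 i1 * v 0 i0).

Lemma mulmx_tr3E (R : pzSemiRingType) (u v : 'rV[R]_3) :
  (u *m v^T) 0 0 = u 0 i0 * v 0 i0 + u 0 i1 * v 0 i1 + u 0 i2 * v 0 i2.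
Proof. by rewrite mxE sum3 !mxE. Qed.

Lemma mulmx_rows3 (R : pzSemiRingType) (a b c : 'rV[R]_3) (S : 'M[R]_3) :
  rows3 a b c *m S = rows3 (a *m S) (b *m S) (c *m S).
Proof.
apply/matrixP => i j; rewrite !mxE.
by case: (ord3P i) => -> /=; rewrite mxE; apply: eq_bigr => k _; rewrite !mxE.
Qed.

Lemma diag_row3_const (R : pzSemiRingType) (a : R) : diag_mx (row3 a a a) = a%:M.
Proof.
rewrite -diag_const_mx; congr diag_mx.
by apply/rowP => j; rewrite !mxE; case: (ord3P j) => ->.
Qed.

Lemma rows3_crossmul_orthonormal (R : realDomainType) (a c : 'rV[R]_3) :
  a *m a^T = 1%:M -> c *m c^T = 1%:M -> a *m c^T = 0 ->
  let V := rows3 a (crossmul c a) c in V *m V^T = 1%:M.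
Proof.
pose e00 (M : 'M[R]_1) := M 0 0.
move=> /(congr1 e00) na /(congr1 e00) nc /(congr1 e00) ac V.
move: na nc ac; rewrite /e00 !mulmx_tr3E !mxE /= => na nc ac.
apply/matrixP => i j; rewrite mxE sum3 !mxE.
case: (ord3P i) => ->; case: (ord3P j) => -> /=; rewrite ?mxE /=.
all: nra.
Qed.

Lemma orthogonal3_SO3_or_opp (R : realType) (V : 'M[R]_3) :
  V *m V^T = 1%:M -> SO3 V \/ SO3 (- V).
Proof.
move=> VVt; have VtV := mulmx1C VVt.
have /eqP : \det V ^+ 2 = 1 by rewrite expr2 -{1}det_tr -det_mulmx VtV det1.
rewrite sqrf_eq1 => /orP[/eqP dV|/eqP dV]; [left|right]; split => //.
  by rewrite [(- V)^T]linearN mulNmx mulmxN opprK.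
by rewrite -[- V]scaleN1r detZ dV; ring.
Qed.

(* The middle row b need not be an eigenvector a priori: symmetry of V S V^T and
   the trace force the middle diagonal entry to be m2. *)
Lemma rows3_conj_diag (R : comPzRingType) (S : 'M[R]_3) (a b c : 'rV_3) m1 m2 m3 :
  S^T = S -> \tr S = m1 + m2 + m3 -> a *m S = m1 *: a -> c *m S = m3 *: c ->
  let V := rows3 a b c in V *m V^T = 1%:M -> V *m S *m V^T = diag_mx (row3 m1 m2 m3).
Proof.
move=> Ssym trS Ha Hc V VVt; set M := V *m S *m V^T.
have Msym : M^T = M by rewrite /M !trmx_mul trmxK Ssym mulmxA.
have VS : V *m S = rows3 (m1 *: a) (b *m S) (m3 *: c).
  by rewrite mulmx_rows3 Ha Hc.
have eigen_row i m : (forall k, (V *m S) i k = m * V i k) ->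
    forall j, M i j = m * (i == j)%:R.
  move=> VSi j; transitivity (m * (1%:M : 'M_3) i j); last by rewrite mxE.
  by rewrite -VVt !mxE mulr_sumr; apply: eq_bigr => k _; rewrite VSi mulrA.
have M0 j : M i0 j = m1 * (i0 == j)%:R by apply: eigen_row => k; rewrite VS !mxE.
have M2 j : M i2 j = m3 * (i2 == j)%:R by apply: eigen_row => k; rewrite VS !mxE.
have M11 : M i1 i1 = m2.
  have : \tr M = \tr S by rewrite /M mxtrace_mulC mulmxA (mulmx1C VVt) mul1mx.
  by rewrite trS /mxtrace sum3 M0 M2 !eqxx !mulr1 => /addIr /addrI.
apply/matrixP => i j; rewrite [RHS]mxE [row3 _ _ _ _ _]mxE.
case: (ord3P i) => ->; case: (ord3P j) => -> /=;
  rewrite ?M0 ?M2 ?M11 /= ?mulr1 ?mulr0 //.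
all: by rewrite -Msym mxE ?M0 ?M2 /= mulr0.
Qed.

Lemma symmetric3_diagonalization_neq (R : realType) (S : 'M[R]_3) m1 m2 m3 :
  S^T = S -> char_poly S = \prod_(r <- [:: m1; m2; m3]) ('X - r%:P) -> m1 != m3 ->
  exists V, SO3 V /\ V *m S *m V^T = diag_mx (row3 m1 m2 m3).
Proof.
move=> Ssym cpS m13.
have unit_eigen m : m \in [:: m1; m2; m3] ->
    exists u : 'rV_3, u *m S = m *: u /\ u *m u^T = 1%:M.
  move=> mS; have /eigenvalueP[v Hv v0] : eigenvalue S m.
    by rewrite eigenvalue_root_char cpS root_prod_XsubC.
  exact: unit_eigenvector v0 Hv.
have [a [Ha na]] := unit_eigen m1 (mem_head _ _).
have [c [Hc nc]] := unit_eigen m3 (mem_last m1 [:: m2; m3]).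
have trS : \tr S = m1 + m2 + m3.
  by rewrite (mxtrace_char_poly_roots cpS) !big_cons big_nil addr0 addrA.
have /= VVt := rows3_crossmul_orthonormal na nc
  (symmetric_eigenvectors_orthogonal Ssym Ha Hc m13).
have VSV := rows3_conj_diag Ssym trS Ha Hc VVt.
set V := rows3 a (crossmul c a) c in VVt VSV.
have [SO3V|SO3V] := orthogonal3_SO3_or_opp VVt; first by exists V.
exists (- V); split => //.
by rewrite mulNmx [(- V)^T]linearN mulmxN mulNmx opprK.
Qed.

Lemma symmetric3_diagonalization (R : realType) (S : 'M[R]_3) m1 m2 m3 :
  S^T = S -> m1 <= m2 -> m2 <= m3 ->
  char_poly S = ('X - m1%:P) * ('X - m2%:P) * ('X - m3%:P) ->
  exists V, SO3 V /\ V *m S *m V^T = diag_mx (row3 m1 m2 m3).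
Proof.
move=> Ssym m12 m23 cpS.
have [m13|m13] := eqVneq m1 m3; last first.
  by apply: symmetric3_diagonalization_neq; rewrite -?prod_XsubC3.
have m21 : m2 = m1 by apply/eqP; rewrite eq_le m12 andbT m13.
subst m2 m3; exists 1%:M; split; first by rewrite /SO3 trmx1 mulmx1 det1.
rewrite mul1mx trmx1 mulmx1 diag_row3_const.
by apply: symmetric_char_poly_scalar Ssym _; rewrite cpS -expr2 -exprSr.
Qed.

Lemma SO3_mul (R : realType) (P Q : 'M[R]_3) : SO3 P -> SO3 Q -> SO3 (P *m Q).
Proof.
move=> [PtP dP] [QtQ dQ]; split; last by rewrite det_mulmx dP dQ mulr1.
by rewrite trmx_mul mulmxA -(mulmxA Q^T) PtP mulmx1 QtQ.
Qed.

Lemma mxtrace_cofmx (R : realType) (A : 'M[R]_3) : \tr (cofmx A) = \tr (\adj A).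
Proof. by apply: eq_bigr => i _; rewrite !mxE. Qed.

Lemma det_sorted_singular_values (R : realType) (A : 'M[R]_3) l1 l2 l3 :
  0 < \det A -> sorted_singular_values A l1 l2 l3 -> \det A = l1 * l2 * l3.
Proof.
move=> detA_gt0 [l1_ge0 l12 l23]; rewrite prod_XsubC3 => /det_char_poly_roots.
rewrite det_mulmx det_tr !big_cons big_nil mulr1 -!exprMn mulrA -expr2 => /eqP.
have l2_ge0 := le_trans l1_ge0 l12; have l3_ge0 := le_trans l2_ge0 l23.
by rewrite eqrXn2 ?mulr_ge0 ?(ltW detA_gt0) // => /eqP.
Qed.

Lemma sorted_singular_values_gt0 (R : realType) (A : 'M[R]_3) l1 l2 l3 :
  0 < \det A -> sorted_singular_values A l1 l2 l3 -> [/\ 0 < l1, 0 < l2 & 0 < l3].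
Proof.
move=> detA_gt0 svA; have detA := det_sorted_singular_values detA_gt0 svA.
case: svA => l1_ge0 l12 l23 _.
have l1_gt0 : 0 < l1.
  rewrite lt_def l1_ge0 andbT; apply: contraTneq detA_gt0 => l10.
  by rewrite detA l10 !mul0r ltxx.
by split=> //; [exact: lt_le_trans l12|exact: lt_le_trans (le_trans l12 l23)].
Qed.

Lemma sorted_singular_values_svd (R : realType) (A : 'M[R]_3) l1 l2 l3 :
  0 < \det A -> sorted_singular_values A l1 l2 l3 ->
  exists U V, [/\ SO3 U, SO3 V & A = U *m diag_mx (row3 l1 l2 l3) *m V].
Proof.
move=> detA_gt0 svA; have detA := det_sorted_singular_values detA_gt0 svA.
have [l1_gt0 l2_gt0 l3_gt0] := sorted_singular_values_gt0 detA_gt0 svA.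
case: svA => _ l12 l23 cpS.
have sq_le (x y : R) : 0 < x -> x <= y -> x ^+ 2 <= y ^+ 2.
  by move=> x_gt0 xy; rewrite ler_pXn2r // nnegrE ltW // (lt_le_trans x_gt0).
have AtA_sym : (A^T *m A)^T = A^T *m A by rewrite trmx_mul trmxK.
have [V [[VtV detV] VSV]] := symmetric3_diagonalization
  AtA_sym (sq_le _ _ l1_gt0 l12) (sq_le _ _ l2_gt0 l23) cpS.
set D := diag_mx (row3 l1 l2 l3).
set Di := diag_mx (map_mx GRing.inv (row3 l1 l2 l3)).
have l_neq0 := row3_neq0 l1_gt0 l2_gt0 l3_gt0.
have DDi : D *m Di = 1%:M by apply: diag_mx_mulV.
have DiD : Di *m D = 1%:M by apply: mulmx1C.
have D2 : diag_mx (row3 (l1 ^+ 2) (l2 ^+ 2) (l3 ^+ 2)) = D *m D.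
  rewrite mulmx_diag; congr diag_mx; apply/rowP => j; rewrite !mxE.
  by case: (ord3P j) => -> /=; rewrite expr2.
set U := A *m V^T *m Di.
have EA : A = U *m D *m V.
  by rewrite /U -!mulmxA (mulmxA Di) DiD mul1mx VtV mulmx1.
exists U, V; split => //; split.
  rewrite /U !trmx_mul trmxK tr_diag_mx -/Di.
  have -> : Di *m (V *m A^T) *m (A *m V^T *m Di) =
            Di *m (V *m (A^T *m A) *m V^T) *m Di by rewrite !mulmxA.
  by rewrite VSV D2 !mulmxA DiD mul1mx DDi.
have detD : \det D = l1 * l2 * l3 by rewrite det_diag prod3 !mxE.
have l123_neq0 : l1 * l2 * l3 != 0 by rewrite !mulf_neq0 ?gt_eqF.
apply: (mulIf l123_neq0).
by rewrite mul1r -{2}detA EA !det_mulmx detV mulr1 detD.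
Qed.

Theorem lemma4p1 (R : realType) (lam : R) (A : 'M[R]_3) (l1 l2 l3 : R) :
  0 < lam -> 0 < \det A ->
  sorted_singular_values A l1 l2 l3 ->
  let alpha := l2 * l3 - lam * l1 in
  let beta := l1 * l3 - lam * l2 in
  let gamma := l1 * l2 - lam * l3 in
  exists Q : 'M[R]_3, SO3 Q /\
    Pfun lam l1 l2 l3 - Nfun lam A =
      (1 - Q i0 i0) * alpha + (1 - Q i1 i1) * beta + (1 - Q i2 i2) * gamma.
Proof.
move=> _ detA_gt0 svA alpha beta gamma.
have detA := det_sorted_singular_values detA_gt0 svA.
have [l1_gt0 l2_gt0 l3_gt0] := sorted_singular_values_gt0 detA_gt0 svA.
have [U [V [SO3U SO3V EA]]] := sorted_singular_values_svd detA_gt0 svA.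
exists (V *m U); split; first exact: SO3_mul.
have l_neq0 := row3_neq0 l1_gt0 l2_gt0 l3_gt0.
have trA : \tr A = (V *m U) i0 i0 * l1 + (V *m U) i1 i1 * l2 + (V *m U) i2 i2 * l3.
  by rewrite EA mxtrace_conj_diag sum3 ![row3 _ _ _ _ _]mxE.
have tr_adjA : \tr (\adj A) =
    l1 * l2 * l3 * ((V *m U) i0 i0 / l1 + (V *m U) i1 i1 / l2 + (V *m U) i2 i2 / l3).
  rewrite {1}EA adj_orthogonal_conj_diag ?SO3U.1 ?SO3V.1 // -EA detA mxtraceZ.
  rewrite mxtrace_conj_diag -trmx_mul sum3 ![map_mx _ _ _ _]mxE ![_^T _ _]mxE.
  by rewrite ![row3 _ _ _ _ _]mxE.
rewrite /Pfun /Nfun mxtrace_cofmx trA tr_adjA /alpha /beta /gamma.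
by field; rewrite !gt_eqF.
Qed.
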